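(* Let $(T,f,\sqsubseteq_L)$ be a leaf-ordered merge tree. Then $\mathcal L(\mathcal T((T,f,\sqsubseteq_L)))=(T,f,\sqsubseteq_L)$.
   Context: A merge tree $(T,f)$: a finite rooted tree $T$ identified with its topological realisation, with a continuous $f\colon T\to\mathbb{R}\cup\{\infty\}$ strictly increasing towards the root, $f(v)=\infty$ iff $v$ is the root; lowest leaf at height $0$; $L(T)$ is the set of leaves. $T_x$ is the subtree of descendants of $x$; $\mathrm{lca}$ the lowest common ancestor; $\mathrm{anc}_h(x)$ the unique ancestor of $x$ at height $h\ge f(x)$; $\mathbb{L}_h=\{x:f(x)=h\}$. A layer-order is a family $(\le_h)_{h\ge0}$ of total orders on the $\mathbb{L}_h$ that is consistent ($h_1\le h_2$ and $x_1\le_{h_1}x_2$ imply $\mathrm{anc}_{h_2}(x_1)\le_{h_2}\mathrm{anc}_{h_2}(x_2)$); $(T,f,(\le_h))$ is an ordered merge tree. A leaf-order is a total order $\sqsubseteq_L$ on $L(T)$ such that $u_1\sqsubseteq_L u\sqsubseteq_L u_2$ implies $u\in T_{\mathrm{lca}(u_1,u_2)}$; $(T,f,\sqsubseteq_L)$ is a leaf-ordered merge tree. $\mathcal L((T,f,(\le_h)))=(T,f,\sqsubseteq_L)$ with $u_1\sqsubseteq_L u_2$ iff $\mathrm{anc}_h(u_1)\le_h\mathrm{anc}_h(u_2)$ for $h=\max(f(u_1),f(u_2))$. $\mathcal T((T,f,\sqsubseteq_L))=(T,f,(\le_h))$ with $x_1\le_h x_2$ (for $x_1,x_2\in\mathbb{L}_h$)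 iff $x_1=x_2$ or $u_1\sqsubseteq_L u_2$ for all leaves $u_1\in T_{x_1}$, $u_2\in T_{x_2}$. *)

From HB Require Import structures.
From mathcomp Require Import all_boot all_order all_algebra.
From mathcomp Require Import reals.
Set Implicit Arguments.
Unset Strict Implicit.
Unset Printing Implicit Defensive.
Import Order.TTheory GRing.Theory Num.Theory.
Local Open Scope ring_scope.

(* A merge tree is encoded combinatorially:
   - a finite vertex type V with a root and a parent map (parent root = root,
     every vertex reaches the root by iterating parent);
   - heights fv v : R of the non-root vertices (the root has height +oo,
     so fv root is irrelevant), strictly increasing towards the root.
   The topological realisation is recovered as the set of points
     None            = the root (height +oo),
     Some (v, h)     = the point of the edge from v (v <> root) to parent v
                       at height h, with fv v <= h < fv (parent v)
                       (no upper bound if parent v is the root).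
   Since f is continuous and strictly increasing along each edge, a point of
   an edge is uniquely determined by its height, so this parametrisation is
   exactly the topological realisation together with f. *)

Section MergeTree.
Variables (R : realType) (V : finType) (root : V) (parent : V -> V)
          (fv : V -> R).

Definition ancV (v w : V) : Prop := exists n, iter n parent v = w.

Definition is_leaf (v : V) : Prop :=
  v <> root /\ forall w, parent w = v -> w = v.

Definition is_merge_tree : Prop :=
  [/\ parent root = root,
      (forall v, ancV v root),
      (forall v, v <> root -> parent v <> root -> fv v < fv (parent v)),
      (exists u, is_leaf u /\ fv u = 0) &
      (forall u, is_leaf u -> 0 <= fv u)].

Definition pt := option (V * R).

Definition valid (p : pt) : bool :=
  match p with
  | None => true
  | Some (v, h) =>
      [&& v != root, fv v <= h & (parent v == root) || (h < fv (parent v))]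
  end.

Definition inLayer (h : R) (p : pt) : bool :=
  valid p && (if p is Some (_, h') then h' == h else false).

Definition ancP (x y : pt) : Prop :=
  match x, y with
  | _, None => True
  | None, Some _ => False
  | Some (v, h), Some (w, h') => h <= h' /\ ancV v w
  end.

Definition leafpt (u : V) : pt := Some (u, fv u).

Definition is_lca (x y z : pt) : Prop :=
  [/\ valid z, ancP x z, ancP y z &
      forall z', valid z' -> ancP x z' -> ancP y z' -> ancP z z'].

Definition is_anc_at (h : R) (x z : pt) : Prop := ancP x z /\ inLayer h z.

Definition is_leaf_order (sq : V -> V -> Prop) : Prop :=
  [/\ (forall u, is_leaf u -> sq u u),
      (forall u1 u2, is_leaf u1 -> is_leaf u2 -> sq u1 u2 -> sq u2 u1 -> u1 = u2),
      (forall u1 u2 u3, is_leaf u1 -> is_leaf u2 -> is_leaf u3 ->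
          sq u1 u2 -> sq u2 u3 -> sq u1 u3),
      (forall u1 u2, is_leaf u1 -> is_leaf u2 -> sq u1 u2 \/ sq u2 u1) &
      (forall u1 u u2, is_leaf u1 -> is_leaf u -> is_leaf u2 ->
          sq u1 u -> sq u u2 ->
          forall z, is_lca (leafpt u1) (leafpt u2) z -> ancP (leafpt u) z)].

Definition toLayer (sq : V -> V -> Prop) (h : R) (x1 x2 : pt) : Prop :=
  x1 = x2 \/
  forall u1 u2, is_leaf u1 -> is_leaf u2 ->
    ancP (leafpt u1) x1 -> ancP (leafpt u2) x2 -> sq u1 u2.

Definition toLeaf (le : R -> pt -> pt -> Prop) (u1 u2 : V) : Prop :=
  let h := Num.max (fv u1) (fv u2) in
  forall y1 y2, is_anc_at h (leafpt u1) y1 -> is_anc_at h (leafpt u2) y2 ->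
    le h y1 y2.

End MergeTree.

From Pilot Require Import Defs.
From HB Require Import structures.
From mathcomp Require Import all_boot all_order all_algebra.
From mathcomp Require Import reals.
From Stdlib Require Import Classical.
Set Implicit Arguments.
Unset Strict Implicit.
Unset Printing Implicit Defensive.
Import Order.TTheory GRing.Theory Num.Theory.
Local Open Scope ring_scope.

(* For leaves u1, u2 with ancestors y1, y2 at height h = max(f u1, f u2):
   if y1 <> y2 and u1 precedes u2, every leaf w1 below y1 precedes every leaf
   w2 below y2, since otherwise convexity of the leaf order with respect to
   lowest common ancestors puts w2 below y1 (when u1 precedes w2) or u1 below
   y2 (when w2 precedes u1), while distinct points of one layer have no common
   descendant.  If y1 = y2, this point is the higher leaf itself, which then
   lies above the other leaf; leaves have no proper descendants, so u1 = u2. *)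

Lemma ex_minn_Prop (P : nat -> Prop) :
  (exists n, P n) -> exists n, P n /\ forall m, P m -> (n <= m)%N.
Proof.
case=> n; elim/ltn_ind: n => n IH Pn.
have [[m [ltmn Pm]] | no_smaller] := classic (exists m, (m < n)%N /\ P m).
  exact: IH Pm.
exists n; split=> // m Pm; rewrite leqNgt; apply/negP => ltmn.
by apply: no_smaller; exists m.
Qed.

Section VertexAncestors.
Variables (V : finType) (parent : V -> V).
Local Notation anc := (ancV parent).

Lemma ancV_refl v : anc v v.
Proof. by exists 0%N. Qed.

Lemma ancV_trans u v w : anc u v -> anc v w -> anc u w.
Proof. by move=> [n <-] [m <-]; exists (m + n)%N; rewrite iterD. Qed.

Lemma ancV_total a v w : anc a v -> anc a w -> anc v w \/ anc w v.
Proof.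
move=> [n <-] [m <-]; have [lenm | ltmn] := leqP n m.
  by left; exists (m - n)%N; rewrite -iterD subnK.
by right; exists (n - m)%N; rewrite -iterD subnK // ltnW.
Qed.

Lemma leaf_ancV_eq (root : V) u v : is_leaf root parent u -> anc v u -> v = u.
Proof.
move=> [_ childless] [n]; elim: n v => [|n IH] v //= reach.
by apply: IH; apply: childless.
Qed.

End VertexAncestors.

Lemma ancP_trans (R : realType) (V : finType) (parent : V -> V)
    (x y z : pt R V) :
  ancP parent x y -> ancP parent y z -> ancP parent x z.
Proof.
case: z => [[w h3]|] //; case: y => [[v h2]|] //; case: x => [[u h1]|] //.
move=> [le12 a12] [le23 a23].
by split; [exact: le_trans le23 | exact: ancV_trans a23].
Qed.

Section MergeTree.
Variables (R : realType) (V : finType) (root : V) (parent : V -> V)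
          (fv : V -> R).
Hypothesis tree : is_merge_tree root parent fv.

Local Notation anc := (ancV parent).
Local Notation valid := (valid root parent fv).
Local Notation leafpt := (leafpt fv).
Local Notation is_anc_at := (is_anc_at root parent fv).

Lemma ancV_fv_le v w : anc v w -> w != root -> fv v <= fv w.
Proof.
have [parent_root _ fv_lt_parent _ _] := tree.
move=> [n <-]; elim: n v => [|n IH] v; first by rewrite lexx.
rewrite iterSr => not_root.
have pv_root : parent v != root.
  by apply: contraNneq not_root => ->; rewrite iter_fix.
have v_root : v != root by apply: contraNneq pv_root => ->; rewrite parent_root.
apply: le_trans (IH _ not_root); apply/ltW/fv_lt_parent; exact/eqP.
Qed.

Lemma vertex_pt_valid v : v != root -> valid (Some (v, fv v)).
Proof.
have [_ _ fv_lt_parent _ _] := tree.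
move=> v_root; rewrite /= v_root lexx /=.
by case: eqP => //= /eqP pv_root; apply: fv_lt_parent; exact/eqP.
Qed.

(* An edge ends strictly below the height of the next vertex up, so the edges of
   a chain of ancestors cover disjoint height ranges. *)
Lemma valid_ancV_eq v w h :
  anc v w -> valid (Some (v, h)) -> valid (Some (w, h)) -> v = w.
Proof.
move=> [[|n] <-] // /and3P [_ _ below_pv] /and3P [w_root fw_le _].
rewrite iterSr in w_root fw_le *.
have pv_root : parent v != root.
  by apply: contraNneq w_root => ->; rewrite iter_fix //; case: tree.
rewrite (negbTE pv_root) /= in below_pv.
have := le_trans (ancV_fv_le (ex_intro _ n erefl) w_root) fw_le.
by rewrite leNgt below_pv.
Qed.

Lemma valid_layer_eq a v w h : anc a v -> anc a w ->
  valid (Some (v, h)) -> valid (Some (w, h)) -> v = w.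
Proof.
move=> av aw valid_v valid_w; case: (ancV_total av aw) => [vw | wv].
  exact: valid_ancV_eq vw valid_v valid_w.
by apply: esym; exact: valid_ancV_eq wv valid_w valid_v.
Qed.

Lemma is_anc_at_uniq h x y1 y2 :
  is_anc_at h x y1 -> is_anc_at h x y2 -> y1 = y2.
Proof.
move=> [a1 layer1] [a2 layer2].
case: y1 a1 layer1 => [[v1 h1]|] // a1 /andP [valid1 /eqP h1_eq].
case: y2 a2 layer2 => [[v2 h2]|] // a2 /andP [valid2 /eqP h2_eq].
subst h1 h2; case: x a1 a2 => [[u hu]|] //= [_ uv1] [_ uv2].
by rewrite (valid_layer_eq uv1 uv2 valid1 valid2).
Qed.

Lemma is_anc_at_exists v h :
  v != root -> fv v <= h -> exists y, is_anc_at h (leafpt v) y.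
Proof.
have [_ reach_root _ _ _] := tree.
have [n] := reach_root v; elim: n v => [|n IH] v reach v_root fv_le.
  by move: v_root; rewrite -reach /= eqxx.
have [stop | climb] := boolP ((parent v == root) || (h < fv (parent v))).
  exists (Some (v, h)); split; first by split; last exact: ancV_refl.
  by rewrite /inLayer /= v_root fv_le stop eqxx.
rewrite negb_or -leNgt in climb; case/andP: climb => pv_root fpv_le.
rewrite iterSr in reach; have [y [pv_y in_layer]] := IH _ reach pv_root fpv_le.
case: y pv_y in_layer => [[w h']|] // [_ pv_w] in_layer.
exists (Some (w, h')); split=> //.
split; first by case/andP: in_layer => _ /eqP ->.
by apply: ancV_trans pv_w; exists 1%N.
Qed.

Lemma is_anc_at_self v : v != root -> is_anc_at (fv v) (leafpt v) (leafpt v).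
Proof.
move=> v_root; split; first by split; last exact: ancV_refl.
by rewrite /inLayer /Defs.leafpt vertex_pt_valid /=.
Qed.

(* The lowest common ancestor sits at the first common vertex ancestor, or at
   the root point [None] when that vertex is the root. *)
Lemma lca_exists a b : exists z, is_lca root parent fv (leafpt a) (leafpt b) z.
Proof.
have [parent_root reach_root _ _ _] := tree.
have [n [b_below first_common]] : exists n, anc b (iter n parent a) /\
    forall m, anc b (iter m parent a) -> (n <= m)%N.
  have [k Ek] := reach_root a; apply: ex_minn_Prop; exists k.
  by rewrite Ek; apply: reach_root.
set c := iter n parent a.
have a_below : anc a c by exists n.
have c_lowest w : anc a w -> anc b w -> anc c w.
  move=> [m <-] /first_common le_nm.
  by exists (m - n)%N; rewrite /c -iterD subnK.
have [c_root | c_root] := eqVneq c root.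
  exists None; split=> //.
  case=> [[w h']|] //= /and3P [w_root _ _] [_ aw] [_ bw].
  have [k] := c_lowest w aw bw.
  by rewrite c_root iter_fix // => w_eq; rewrite -w_eq eqxx in w_root.
exists (Some (c, fv c)); split.
- exact: vertex_pt_valid.
- by split; first exact: ancV_fv_le.
- by split; first exact: ancV_fv_le.
- case=> [[w h']|] //= /and3P [w_root fw_le _] [_ aw] [_ bw].
  have cw := c_lowest w aw bw.
  by split; first exact: le_trans (ancV_fv_le cw w_root) fw_le.
Qed.

Lemma leaf_anc_at_height_eq u v y : is_leaf root parent v ->
  is_anc_at (fv v) (leafpt u) y -> is_anc_at (fv v) (leafpt v) y -> u = v.
Proof.
move=> leaf_v uy vy.
have v_root : v != root by apply/eqP; case: leaf_v.
have y_eq := is_anc_at_uniq vy (is_anc_at_self v_root).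
case: uy; rewrite y_eq /Defs.leafpt /= => -[_ uv] _.
exact: leaf_ancV_eq leaf_v uv.
Qed.

Section LeafOrder.
Variable sq : V -> V -> Prop.
Hypothesis leaf_order : is_leaf_order root parent fv sq.

Local Notation leaf := (is_leaf root parent).

Lemma leaf_order_convex a w b y : leaf a -> leaf w -> leaf b ->
  sq a w -> sq w b -> valid y ->
  ancP parent (leafpt a) y -> ancP parent (leafpt b) y ->
  ancP parent (leafpt w) y.
Proof.
have [_ _ _ _ convex] := leaf_order.
move=> la lw lb aw wb valid_y ay by_.
have [z lca_z] := lca_exists a b.
have wz := convex _ _ _ la lw lb aw wb z lca_z.
have [_ _ _ lowest] := lca_z.
exact: ancP_trans wz (lowest y valid_y ay by_).
Qed.

Lemma toLayer_of_sq h u1 u2 y1 y2 : leaf u1 -> leaf u2 -> sq u1 u2 ->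
  is_anc_at h (leafpt u1) y1 -> is_anc_at h (leafpt u2) y2 ->
  toLayer root parent fv sq h y1 y2.
Proof.
have [_ _ _ total _] := leaf_order.
move=> l1 l2 s12 [a1 layer1] [a2 layer2].
have /andP [valid1 _] := layer1.
have /andP [valid2 _] := layer2.
have [-> | y12] := eqVneq y1 y2; [by left | right].
move=> w1 w2 lw1 lw2 w1y1 w2y2.
have [//| s21] := total _ _ lw1 lw2; suff: y1 = y2 by move/eqP: y12.
have [s1w2 | sw21] := total _ _ l1 lw2.
  have w2y1 := leaf_order_convex l1 lw2 lw1 s1w2 s21 valid1 a1 w1y1.
  exact: is_anc_at_uniq (conj w2y1 layer1) (conj w2y2 layer2).
have u1y2 := leaf_order_convex lw2 l1 l2 sw21 s12 valid2 w2y2 a2.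
exact: is_anc_at_uniq (conj a1 layer1) (conj u1y2 layer2).
Qed.

Lemma sq_of_toLeaf u1 u2 : leaf u1 -> leaf u2 ->
  toLeaf root parent fv (toLayer root parent fv sq) u1 u2 -> sq u1 u2.
Proof.
have [refl _ _ _ _] := leaf_order.
move=> l1 l2 hyp; set h := Num.max (fv u1) (fv u2).
have [u1_root u2_root] : u1 != root /\ u2 != root.
  by split; apply/eqP; [case: l1 | case: l2].
have [y1 y1_at] : exists y, is_anc_at h (leafpt u1) y.
  by apply: is_anc_at_exists; rewrite ?le_max ?lexx.
have [y2 y2_at] : exists y, is_anc_at h (leafpt u2) y.
  by apply: is_anc_at_exists; rewrite ?le_max ?lexx ?orbT.
case: (hyp y1 y2 y1_at y2_at) => [y12 | below]; last first.
  exact: below y1_at.1 y2_at.1.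
suff -> : u1 = u2 by exact: refl.
rewrite -y12 {}/h in y1_at y2_at.
case: (leP (fv u1) (fv u2)) => [le12 | /ltW le21].
  rewrite max_r // in y1_at y2_at.
  exact: leaf_anc_at_height_eq l2 y1_at y2_at.
rewrite max_l // in y1_at y2_at.
exact/esym/(leaf_anc_at_height_eq l1 y2_at y1_at).
Qed.

End LeafOrder.
End MergeTree.

Theorem lemma9 (R : realType) (V : finType) (root : V) (parent : V -> V)
    (fv : V -> R) (sq : V -> V -> Prop) :
  is_merge_tree root parent fv ->
  is_leaf_order root parent fv sq ->
  forall u1 u2, is_leaf root parent u1 -> is_leaf root parent u2 ->
    (toLeaf root parent fv (toLayer root parent fv sq) u1 u2 <-> sq u1 u2).
Proof.
move=> tree leaf_order u1 u2 l1 l2; split; first exact: sq_of_toLeaf.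
by move=> s12 h y1 y2; exact: toLayer_of_sq.
Qed.
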